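(* Let $H,K\in C^\infty(\mathbb R^3\times\mathbb R^3)$ satisfy $\{H,K\}=0$ for the Poisson structure $\mathfrak E$. Then: (a) on $(\widetilde{\mathbb T},\Omega)$ the functions $H\circ\mathbf J_e$, $K\circ\mathbf J_e$, $J^0$, $\Gamma^0$ pairwise Poisson commute; moreover $K_1\circ\mathbf J_e=J^0\Gamma^0$ and $K_2\circ\mathbf J_e=(\Gamma^0)^2$, where $K_1(\vec J,\vec\Gamma)=\vec\Gamma\cdot\vec J$, $K_2(\vec J,\vec\Gamma)=\vec\Gamma^2$; (b) on $(\mathbb R^3\times\dot{\mathbb R}^3,\Omega_\mu)$ the functions $H\circ\mathbf J_{e,\mu}$, $K\circ\mathbf J_{e,\mu}$ and $K_2\circ\mathbf J_{e,\mu}=\vec y^2$ pairwise Poisson commute; (c) on $(S_\nu,\Omega|_{S_\nu})$ the functions $H\circ\mathbf J_{e,\nu}$, $K\circ\mathbf J_{e,\nu}$ and $J^0|_{S_\nu}$ pairwise Poisson commute.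
   Context: Pauli matrices $\sigma_0=I_2$, $\sigma_1=\begin{pmatrix}0&1\\1&0\end{pmatrix}$, $\sigma_2=\begin{pmatrix}0&i\\-i&0\end{pmatrix}$, $\sigma_3=\mathrm{diag}(1,-1)$, $\vec\sigma=(\sigma_1,\sigma_2,\sigma_3)$. $\widetilde{\mathbb T}=\{(\vartheta,\zeta)\in\mathbb C^2\times\mathbb C^2:\zeta\ne0\}$ with $\Omega=d\zeta^+\wedge d\vartheta-d\vartheta^+\wedge d\zeta$. $\mathbf J_e=(\vec J,\vec\Gamma)$, $\vec J=\frac i2(\zeta^+\vec\sigma\vartheta-\vartheta^+\vec\sigma\zeta)$, $\vec\Gamma=-\zeta^+\vec\sigma\zeta$; $J^0=\frac i2(\zeta^+\vartheta-\vartheta^+\zeta)$, $\Gamma^0=-\zeta^+\zeta$. $\mathfrak E$: $\{J^k,J^l\}=-\epsilon_{klm}J^m$, $\{J^k,\Gamma^l\}=-\epsilon_{klm}\Gamma^m$, $\{\Gamma^k,\Gamma^l\}=0$ (Lie–Poisson structure of $\mathbf e(3)^*$ in coordinates $J_k=-J^k,\Gamma_k=-\Gamma^k$). For $\mu\in\mathbb R$: $\Phi(P,\zeta)=((P-\frac{i\mu}{\zeta^+\zeta}\sigma_0)\zeta,\zeta)$ on $H_0(2)\times(\mathbb C^2\setminus\{0\})$; $(\vec p,\vec y)=(-\frac12\mathrm{Tr}(\vec\sigma P),\mathrm{Tr}(\vec\sigma\zeta\zeta^+))$ identifies the quotient by $\zeta\mapsto e^{it}\zeta$ with $\mathbb R^3\times\dot{\mathbb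 R}^3$; $\Omega_\mu$ is the $2$-form on $\mathbb R^3\times\dot{\mathbb R}^3$ whose pullback to $H_0(2)\times(\mathbb C^2\setminus\{0\})$ is $\Phi^*\Omega$; $\mathbf J_{e,\mu}(\vec p,\vec y)=(\vec y\times\vec p+\mu\vec y/\|\vec y\|,-\vec y)$. For $\nu<0$: $S_\nu=\{(\vartheta,\zeta)\in\widetilde{\mathbb T}:\zeta^+\zeta=-\nu,\ \zeta^+\vartheta+\vartheta^+\zeta=0\}$ (a symplectic submanifold) and $\mathbf J_{e,\nu}=\mathbf J_e|_{S_\nu}$. *)

From HB Require Import structures.
From mathcomp Require Import all_boot all_order all_algebra.
From mathcomp Require Import all_classical all_reals all_analysis.
From mathcomp Require Import complex.
Set Implicit Arguments. Unset Strict Implicit. Unset Printing Implicit Defensive.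
Import Order.TTheory GRing.Theory Num.Theory.
Import numFieldNormedType.Exports.
Local Open Scope ring_scope.
Local Open Scope classical_set_scope.

Definition crd (R : realType) (n : nat) (x : 'rV[R]_n.+1) (k : nat) : R :=
  x ord0 (inord k).

Fixpoint Ck (R : realType) (n : nat) (k : nat) (f : 'rV[R]_n -> R) : Prop :=
  match k with
  | 0 => continuous f
  | k'.+1 => (forall x : 'rV[R]_n, differentiable f x) /\ (forall v : 'rV[R]_n, Ck k' (fun x : 'rV[R]_n => 'd f x v))
  end.
Definition smooth (R : realType) (n : nat) (f : 'rV[R]_n -> R) : Prop :=
  forall k, Ck k f.

(* Poisson commutation at a point x of a (sub)manifold of R^n whose tangent
   space at x is T, for a 2-form whose value at x is om : the Hamiltonian
   vector fields X_f, X_g (i.e. the tangent vectors with om(X_f, v) = df_x(v)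
   for all tangent v) satisfy {f,g}(x) = om(X_f, X_g) = 0.
   (The sign convention for X_f is irrelevant for vanishing.) *)
Definition poisson_commute_at (R : realType) (n : nat) (T : set 'rV[R]_n)
  (om : 'rV[R]_n -> 'rV[R]_n -> R) (f g : 'rV[R]_n -> R) (x : 'rV[R]_n) : Prop :=
  forall Xf Xg : 'rV[R]_n, T Xf -> T Xg ->
    (forall v, T v -> om Xf v = 'd f x v) ->
    (forall v, T v -> om Xg v = 'd g x v) ->
    om Xf Xg = 0.

(* Levi-Civita symbol on indices 0,1,2 : eps_klm = (k-l)(l-m)(m-k)/2 *)
Definition eps (R : realType) (k l m : nat) : R :=
  ((k%:R - l%:R) * (l%:R - m%:R) * (m%:R - k%:R)) / 2.

(* w = (J^1,J^2,J^3,Gamma^1,Gamma^2,Gamma^3) = (w_0,...,w_5).           *)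
(*  {J^k,J^l} = -eps_klm J^m, {J^k,Gamma^l} = -eps_klm Gamma^m,         *)
(*  {Gamma^k,Gamma^l} = 0 (hence {Gamma^k,J^l} = -eps_klm Gamma^m).     *)

Definition piE (R : realType) (w : 'rV[R]_6) (a b : 'I_6) : R :=
  if (a < 3)%N && (b < 3)%N then - \sum_(m < 3) eps R a b m * crd w m
  else if (a < 3)%N && (3 <= b)%N then - \sum_(m < 3) eps R a (b - 3) m * crd w (3 + m)
  else if (3 <= a)%N && (b < 3)%N then - \sum_(m < 3) eps R (a - 3) b m * crd w (3 + m)
  else 0.

Definition pd (R : realType) (n : nat) (F : 'rV[R]_n -> R) (z : 'rV[R]_n) (a : 'I_n) : R :=
  'd F z (delta_mx ord0 a).

Definition LP_bracket (R : realType) (F G : 'rV[R]_6 -> R) (w : 'rV[R]_6) : R :=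
  \sum_(a < 6) \sum_(b < 6) piE w a b * pd F w a * pd G w b.

Definition K1 (R : realType) (w : 'rV[R]_6) : R := \sum_(k < 3) crd w (3 + k) * crd w k.
Definition K2 (R : realType) (w : 'rV[R]_6) : R := \sum_(k < 3) crd w (3 + k) ^+ 2.

Definition iC (R : realType) : R[i] := Complex 0 1.

(* sigma_1, sigma_2 = [[0,i],[-i,0]], sigma_3 ; index k = 0,1,2 <-> sigma_{k+1} *)
Definition sigma1 (R : realType) : 'M[R[i]]_2 :=
  \matrix_(i < 2, j < 2) (if i != j then 1 else 0).
Definition sigma2 (R : realType) : 'M[R[i]]_2 :=
  \matrix_(i < 2, j < 2)
    (if ((i : nat) == 0%N) && ((j : nat) == 1%N) then iC R
     else if ((i : nat) == 1%N) && ((j : nat) == 0%N) then - iC R else 0).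
Definition sigma3 (R : realType) : 'M[R[i]]_2 :=
  \matrix_(i < 2, j < 2)
    (if i == j then (if (i : nat) == 0%N then 1 else -1) else 0).
Definition sigma (R : realType) (k : nat) : 'M[R[i]]_2 :=
  if k == 0%N then sigma1 R else if k == 1%N then sigma2 R else sigma3 R.

Definition hc (R : realType) (u : 'cV[R[i]]_2) : 'rV[R[i]]_2 := (map_mx conjc u)^T.
Definition hform (R : realType) (u : 'cV[R[i]]_2) (M : 'M[R[i]]_2) (v : 'cV[R[i]]_2) : R[i] :=
  (hc u *m M *m v) ord0 ord0.

(* C^2 x C^2 as the real vector space R^8:                              *)

Definition theta (R : realType) (x : 'rV[R]_8) : 'cV[R[i]]_2 :=
  \col_(j < 2) Complex (crd x (2 * j)) (crd x (2 * j + 1)).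
Definition zeta (R : realType) (x : 'rV[R]_8) : 'cV[R[i]]_2 :=
  \col_(j < 2) Complex (crd x (4 + 2 * j)) (crd x (5 + 2 * j)).
(* inverse map (theta, zeta) |-> x *)
Definition toR8 (R : realType) (th ze : 'cV[R[i]]_2) : 'rV[R]_8 :=
  \row_(a < 8)
    (let w := if (a < 4)%N then th else ze in
     let c := w (inord ((a %% 4) %/ 2)) ord0 in
     if odd a then complex.Im c else complex.Re c).

Definition Ttilde (R : realType) : set 'rV[R]_8 := [set x | zeta x != 0].

(* Omega = d zeta^+ /\ d theta - d theta^+ /\ d zeta (constant 2-form),
   (alpha /\ beta)(u,v) = alpha(u) beta(v) - alpha(v) beta(u).
   Its value is real; we take the real part. *)
Definition Omega (R : realType) (u v : 'rV[R]_8) : R :=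
  complex.Re
    ((hform (zeta u) 1%:M (theta v) - hform (zeta v) 1%:M (theta u))
     - (hform (theta u) 1%:M (zeta v) - hform (theta v) 1%:M (zeta u))).

Definition Jup (R : realType) (k : nat) (x : 'rV[R]_8) : R :=
  complex.Re (Complex 0 (2^-1) *
    (hform (zeta x) (sigma R k) (theta x) - hform (theta x) (sigma R k) (zeta x))).
Definition Gup (R : realType) (k : nat) (x : 'rV[R]_8) : R :=
  complex.Re (- hform (zeta x) (sigma R k) (zeta x)).
Definition J0 (R : realType) (x : 'rV[R]_8) : R :=
  complex.Re (Complex 0 (2^-1) *
    (hform (zeta x) 1%:M (theta x) - hform (theta x) 1%:M (zeta x))).
Definition G0 (R : realType) (x : 'rV[R]_8) : R :=
  complex.Re (- hform (zeta x) 1%:M (zeta x)).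
Definition Je (R : realType) (x : 'rV[R]_8) : 'rV[R]_6 :=
  \row_(a < 6) (if (a < 3)%N then Jup a x else Gup (a - 3) x).

Definition pvec (R : realType) (x : 'rV[R]_6) (k : nat) : R := crd x k.
Definition yvec (R : realType) (x : 'rV[R]_6) (k : nat) : R := crd x (3 + k).
Definition ysq (R : realType) (x : 'rV[R]_6) : R := \sum_(k < 3) yvec x k ^+ 2.
Definition ynorm (R : realType) (x : 'rV[R]_6) : R := Num.sqrt (ysq x).
Definition Rdot3 (R : realType) : set 'rV[R]_6 := [set x | ysq x != 0].

Definition Jemu (R : realType) (mu : R) (x : 'rV[R]_6) : 'rV[R]_6 :=
  \row_(a < 6)
    (if (a < 3)%N then
       \sum_(l < 3) \sum_(m < 3) eps R a l m * yvec x l * pvec x m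
       + mu * yvec x a / ynorm x
     else - yvec x (a - 3)).

(* H_0(2) x C^2 parametrised (linear isomorphism) by R^7:
   P(q) = [[q0, q1 + i q2], [q1 - i q2, -q0]] (general traceless Hermitian),
   zeta(q) = (q3 + i q4, q5 + i q6). *)
Definition Pof (R : realType) (q : 'rV[R]_7) : 'M[R[i]]_2 :=
  \matrix_(i < 2, j < 2)
    (if i == j then (if (i : nat) == 0%N then Complex (crd q 0) 0 else Complex (- crd q 0) 0)
     else if (i : nat) == 0%N then Complex (crd q 1) (crd q 2)
     else Complex (crd q 1) (- crd q 2)).
Definition zetaof (R : realType) (q : 'rV[R]_7) : 'cV[R[i]]_2 :=
  \col_(j < 2) Complex (crd q (3 + 2 * j)) (crd q (4 + 2 * j)).

Definition Phi (R : realType) (mu : R) (q : 'rV[R]_7) : 'rV[R]_8 :=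
  let ze := zetaof q in
  let n2 := complex.Re (hform ze 1%:M ze) in
  toR8 ((Pof q - (Complex 0 (mu / n2)) *: 1%:M) *m ze) ze.

(* (p, y) = (-1/2 Tr(sigma P), Tr(sigma zeta zeta^+)) ; these traces are real *)
Definition proj (R : realType) (q : 'rV[R]_7) : 'rV[R]_6 :=
  \row_(a < 6)
    (if (a < 3)%N then complex.Re (- Complex (2^-1) 0 * \tr (sigma R a *m Pof q))
     else complex.Re (\tr (sigma R (a - 3) *m (zetaof q *m hc (zetaof q))))).

(* om is (a representative of) Omega_mu : its pullback by the quotient map
   equals Phi^* Omega on H_0(2) x (C^2 \ 0). *)
Definition is_Omega_mu (R : realType) (mu : R) (om : 'rV[R]_6 -> 'rV[R]_6 -> 'rV[R]_6 -> R) : Prop :=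
  forall q : 'rV[R]_7, zetaof q != 0 ->
    forall u v : 'rV[R]_7,
      om (proj q) ('d (@proj R) q u) ('d (@proj R) q v)
      = Omega ('d (Phi mu) q u) ('d (Phi mu) q v).

Definition S_nu (R : realType) (nu : R) : set 'rV[R]_8 :=
  [set x | zeta x != 0 /\ hform (zeta x) 1%:M (zeta x) = Complex (- nu) 0
           /\ hform (zeta x) 1%:M (theta x) + hform (theta x) 1%:M (zeta x) = 0].

(* defining functions of S_nu (both are real-valued) *)
Definition cS1 (R : realType) (x : 'rV[R]_8) : R :=
  complex.Re (hform (zeta x) 1%:M (zeta x)).
Definition cS2 (R : realType) (x : 'rV[R]_8) : R :=
  complex.Re (hform (zeta x) 1%:M (theta x) + hform (theta x) 1%:M (zeta x)).
(* tangent space of the regular level set S_nu at x *)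
Definition TS (R : realType) (x : 'rV[R]_8) : set 'rV[R]_8 :=
  [set v | 'd (@cS1 R) x v = 0 /\ 'd (@cS2 R) x v = 0].

From Pilot Require Import Defs.
From HB Require Import structures.
From mathcomp Require Import all_boot all_order all_algebra.
From mathcomp Require Import all_classical all_reals all_analysis.
From mathcomp Require Import complex.
From mathcomp Require Import ring lra.
Import Order.TTheory GRing.Theory Num.Theory.
Import numFieldNormedType.Exports.
Local Open Scope ring_scope.
Local Open Scope classical_set_scope.

(* In real coordinates Omega is a constant symplectic form and the components
   of J_e, J^0, Gamma^0 are quadratic polynomials, so their Hamiltonian vector
   fields Y = Omega^{-1} d(.) can be computed.  Evaluating dJ^a(Y_b) gives the
   Lie-Poisson tensor of E at J_e(x): J_e is a Poisson map, whence
   {H o J_e, K o J_e} = {H, K} o J_e = 0, while the fields of J^0 and Gamma^0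
   are killed by every dJ^a.  On S_nu the same fields, corrected along
   Y_{Gamma^0} to become tangent to S_nu, do the job.  For Omega_mu one uses
   J_{e,mu} o pi = J_e o Phi, where pi is the Hopf-type projection (p, y):
   pushing forward by dpi the lifts U_b with dPhi(U_b) = Y_b gives Hamiltonian
   fields for the components of J_{e,mu}; pi is onto R^3 x (R^3 \ 0) and dpi
   has a right inverse.  K_2 = Gamma^2 is a Casimir of E. *)

Set Implicit Arguments. Unset Strict Implicit. Unset Printing Implicit Defensive.

Section RowCoordinates.
Variable R : realType.

Definition vrow (n : nat) (g : nat -> R) : 'rV[R]_n.+1 := \row_(i < n.+1) g i.

Lemma crd_vrow n g k : (k <= n)%N -> crd (vrow n g) k = g k.
Proof. by move=> hk; rewrite /crd /vrow mxE inordK. Qed.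

Lemma vrow_sum_delta n g : vrow n g = \sum_(a < n.+1) g a *: 'e_a.
Proof.
apply/rowP => j; rewrite summxE (bigD1 j) //= big1 ?addr0.
  by rewrite !mxE !eqxx mulr1.
by move=> i /negbTE ij; rewrite !mxE eq_sym ij mulr0.
Qed.

Lemma row_eq_crd n (u w : 'rV[R]_n.+1) :
  (forall k, (k <= n)%N -> crd u k = crd w k) -> u = w.
Proof.
move=> h; apply/rowP => i; have := h i; rewrite /crd inord_val; apply.
by rewrite -ltnS ltn_ord.
Qed.

Definition ebasis n k : 'rV[R]_n.+1 := vrow n (fun j => (j == k)%:R).

Lemma row_sum_ebasis n (v : 'rV[R]_n.+1) : v = \sum_(k < n.+1) crd v k *: ebasis n k.
Proof.
apply/rowP => j; rewrite summxE (bigD1 j) //= big1 ?addr0.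
  by rewrite !mxE eqxx mulr1 /crd inord_val.
by move=> i ij; rewrite !mxE (inj_eq val_inj) eq_sym (negbTE ij) mulr0.
Qed.

Lemma crd_delta n (b : 'I_n.+1) j :
  (j <= n)%N -> crd (delta_mx ord0 b : 'rV[R]_n.+1) j = (j == b)%:R.
Proof.
move=> hj; rewrite /crd mxE eqxx /=; congr ((_ : bool)%:R).
by rewrite -(inj_eq val_inj) /= inordK.
Qed.

Lemma crdBZ n (u w : 'rV[R]_n.+1) a k : crd (u - a *: w) k = crd u k - a * crd w k.
Proof. by rewrite /crd !mxE. Qed.

End RowCoordinates.
Arguments ebasis {R} n k.

Section Differentials.
Variable R : realType.

Lemma is_diff_crd n k (x : 'rV[R]_n.+1) :
  is_diff x (fun y : 'rV[R]_n.+1 => crd y k) (fun v => crd v k).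
Proof.
have lin : linear (fun y : 'rV[R]_n.+1 => crd y k) by move=> a u v; rewrite /crd !mxE.
pose f : {linear 'rV[R]_n.+1 -> R^o} :=
  HB.pack (fun y : 'rV[R]_n.+1 => crd y k) (GRing.isLinear.Build _ _ _ _ _ lin).
have fc : continuous f by move=> y; exact: coord_continuous.
apply: DiffDef; first exact: (linear_differentiable _ fc).
exact: (diff_lin _ fc).
Qed.

Lemma is_diff_sum (U V : normedModType R) (I : Type) (r : seq I) (g dg : I -> U -> V)
    (x : U) :
  (forall i, is_diff x (g i) (dg i)) ->
  is_diff x (fun y => \sum_(i <- r) g i y) (fun v => \sum_(i <- r) dg i v).
Proof.
move=> hg; elim: r => [|a r IH].
  have -> : (fun y => \sum_(i <- [::]) g i y) = cst 0.
    by apply/funext => y; rewrite big_nil.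
  by apply: is_diff_eq (is_diff_cst 0 x) _; apply/funext => v; rewrite big_nil.
have -> : (fun y => \sum_(i <- a :: r) g i y) = g a + (fun y => \sum_(i <- r) g i y).
  by apply/funext => y; rewrite big_cons.
by apply: is_diff_eq (is_diffD (hg a) IH) _; apply/funext => v; rewrite big_cons.
Qed.

Lemma is_diff_scalel (U V : normedModType R) (k dk : U -> R) (c : V) x :
  is_diff x k dk -> is_diff x (fun z => k z *: c) (fun v => dk v *: c).
Proof.
move=> hk; apply: DiffDef; first exact: differentiableZl.
by rewrite diffZl // diff_val.
Qed.

Lemma is_diff_vrow n m (f : nat -> 'rV[R]_n -> R) (x : 'rV[R]_n) :
  (forall k, differentiable (f k) x) ->
  is_diff x (fun y => vrow m (fun k => f k y)) (fun v => vrow m (fun k => 'd (f k) x v)).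
Proof.
move=> hf; under eq_fun do rewrite vrow_sum_delta.
apply: is_diff_eq (is_diff_sum _ (fun a => is_diff_scalel 'e_a (differentiableP (hf a)))) _.
by apply/funext => v; rewrite vrow_sum_delta.
Qed.

Lemma diff_comp_vrow n m (F : 'rV[R]_n -> 'rV[R]_m.+1) (f : nat -> 'rV[R]_n -> R)
    (H : 'rV[R]_m.+1 -> R) x v :
  (forall y, F y = vrow m (fun k => f k y)) ->
  (forall k, differentiable (f k) x) -> differentiable H (F x) ->
  'd (H \o F) x v = \sum_(a < m.+1) 'd (f a) x v * pd H (F x) a.
Proof.
move=> hF hf hH.
have dF : is_diff x F (fun v => vrow m (fun k => 'd (f k) x v)).
  by rewrite (funext hF); exact: is_diff_vrow.
rewrite diff_comp //= (diff_val (f := F)) vrow_sum_delta linear_sum.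
by apply: eq_bigr => a _; rewrite linearZ.
Qed.

Lemma smooth_differentiable n (H : 'rV[R]_n -> R) :
  smooth H -> forall w, differentiable H w.
Proof. by move=> sH; have [] := sH 1%N. Qed.

(* Polynomials of degree at most two in the coordinates, given by their lists
   of quadratic monomials [c x_i x_j] and linear monomials [c x_i]; written with
   [foldr] so that they unfold by computation on explicit lists. *)
Definition quad n (Q : seq (R * nat * nat)) (L : seq (R * nat)) (x : 'rV[R]_n.+1) : R :=
  foldr (fun m s => m.1.1 * (crd x m.1.2 * crd x m.2) + s)
    (foldr (fun m s => m.1 * crd x m.2 + s) 0 L) Q.

Definition dquad n Q L (x v : 'rV[R]_n.+1) : R :=
  foldr (fun m s => m.1.1 * (crd x m.1.2 * crd v m.2 + crd v m.1.2 * crd x m.2) + s)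
    (foldr (fun m s => m.1 * crd v m.2 + s) 0 L) Q.

Lemma is_diff_quad n Q L (x : 'rV[R]_n.+1) : is_diff x (quad Q L) (dquad Q L x).
Proof.
elim: Q => [|[[c i] j] Q IHQ].
  elim: L => [|[c i] L IHL]; first exact: is_diff_cst.
  exact: is_diffD (is_diffZ c (is_diff_crd i x)) IHL.
apply: is_diff_eq
  (is_diffD (is_diffZ c (is_diffM (is_diff_crd i x) (is_diff_crd j x))) IHQ) _.
apply/funext => v.
change (c * (crd x i * crd v j + crd x j * crd v i) + dquad Q L x v
        = c * (crd x i * crd v j + crd v i * crd x j) + dquad Q L x v); ring.
Qed.

Lemma diff_quadE n Q L (x : 'rV[R]_n.+1) : 'd (quad Q L) x = dquad Q L x :> (_ -> _).
Proof. by have h := is_diff_quad Q L x; rewrite diff_val. Qed.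

Lemma diff_quad n Q L (x v : 'rV[R]_n.+1) : 'd (quad Q L) x v = dquad Q L x v.
Proof. by rewrite diff_quadE. Qed.

Lemma differentiable_quad n Q L (x : 'rV[R]_n.+1) : differentiable (quad Q L) x.
Proof. by have h := is_diff_quad Q L x; exact: ex_diff. Qed.

Definition grad n Q L (x : 'rV[R]_n.+1) k : R :=
  foldr (fun m s => m.1.1 * (crd x m.1.2 * (m.2 == k)%:R + (m.1.2 == k)%:R * crd x m.2) + s)
    (foldr (fun m s => m.1 * (m.2 == k)%:R + s) 0 L) Q.

Lemma dquad_ebasis n Q L (x : 'rV[R]_n.+1) k :
  all (fun m => (m.1.2 <= n) && (m.2 <= n))%N Q -> all (fun m => m.2 <= n)%N L ->
  dquad Q L x (ebasis n k) = grad Q L x k.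
Proof.
rewrite /dquad /grad; elim: Q => [_ /=|[[c i] j] Q IHQ /= /andP[/andP[hi hj] hQ] hL].
  elim: L => [//|[c i] L IHL /= /andP[hi hL]].
  by rewrite IHL // /ebasis crd_vrow.
by rewrite IHQ // /ebasis !crd_vrow.
Qed.

Lemma dquadBZ n Q L (x u w : 'rV[R]_n.+1) a :
  dquad Q L x (u - a *: w) = dquad Q L x u - a * dquad Q L x w.
Proof. by rewrite -!diff_quad linearB linearZ. Qed.

End Differentials.

Section HamiltonianFields.
Variables (R : realType) (n : nat) (T : set 'rV[R]_n) (om : 'rV[R]_n -> 'rV[R]_n -> R).
Variable x : 'rV[R]_n.
Hypothesis om_anti : forall u v, T u -> T v -> om u v = - om v u.

Definition hamiltonian_at (g : 'rV[R]_n -> R) (Y : 'rV[R]_n) :=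
  T Y /\ forall v, T v -> om Y v = 'd g x v.

Lemma poisson_commute_hamiltonian f g Y :
  hamiltonian_at g Y -> 'd f x Y = 0 -> poisson_commute_at T om f g x.
Proof.
move=> [TY hY] dfY Xf Xg TXf TXg hXf hXg.
by rewrite om_anti // hXg // -hY // om_anti // hXf // dfY opprK.
Qed.

Section PoissonMap.
Variables (Phi : 'rV[R]_n -> 'rV[R]_6) (psi : nat -> 'rV[R]_n -> R) (Y : 'I_6 -> 'rV[R]_n).
Hypothesis PhiE : forall y, Phi y = vrow 5 (fun k => psi k y).
Hypothesis psi_diff : forall k, differentiable (psi k) x.
Hypothesis psi_ham : forall b : 'I_6, hamiltonian_at (psi b) (Y b).

Lemma poisson_map_commute (F G : 'rV[R]_6 -> R) :
  (forall a b : 'I_6, 'd (psi a) x (Y b) = Defs.piE (Phi x) a b) ->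
  (forall w, differentiable F w) -> (forall w, differentiable G w) ->
  LP_bracket F G (Phi x) = 0 ->
  poisson_commute_at T om (F \o Phi) (G \o Phi) x.
Proof.
move=> bracket dF dG hFG Xf Xg TXf TXg hXf hXg; rewrite -hFG.
have chain H v : (forall w, differentiable H w) ->
    'd (H \o Phi) x v = \sum_(a < 6) 'd (psi a) x v * pd H (Phi x) a.
  by move=> dH; apply: diff_comp_vrow.
rewrite om_anti // hXg // chain // -sumrN /LP_bracket exchange_big.
apply: eq_bigr => b _; have [TY hY] := psi_ham b.
rewrite -hY // om_anti // mulNr opprK hXf // chain // mulr_suml.
by apply: eq_bigr => a _; rewrite bracket.
Qed.

Lemma casimir_commute (F : 'rV[R]_6 -> R) (g : 'rV[R]_n -> R) Z :
  hamiltonian_at g Z -> (forall a : 'I_6, 'd (psi a) x Z = 0) ->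
  (forall w, differentiable F w) -> poisson_commute_at T om (F \o Phi) g x.
Proof.
move=> hZ psiZ dF; apply: poisson_commute_hamiltonian hZ _.
rewrite (diff_comp_vrow _ PhiE) //; apply: big1 => a _.
by rewrite psiZ mul0r.
Qed.

End PoissonMap.
End HamiltonianFields.

Section ComplexCoordinates.
Variable R : realType.

Lemma widen_ord_max_2 : widen_ord (leqnSn 1) ord_max = ord0 :> 'I_2. Proof. exact: val_inj. Qed.

Lemma hformE (u v : 'cV[R[i]]_2) M : hform u M v =
  (u ord0 ord0)^*%C * (M ord0 ord0 * v ord0 ord0 + M ord0 ord_max * v ord_max ord0)
  + (u ord_max ord0)^*%C * (M ord_max ord0 * v ord0 ord0 + M ord_max ord_max * v ord_max ord0).
Proof. rewrite /hform /hc !(mxE, big_ord_recr, big_ord0) /= !widen_ord_max_2; ring. Qed.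

Lemma theta_zetaE (x : 'rV[R]_8) :
  [/\ theta x ord0 ord0 = Complex (crd x 0) (crd x 1),
      theta x ord_max ord0 = Complex (crd x 2) (crd x 3),
      zeta x ord0 ord0 = Complex (crd x 4) (crd x 5)
    & zeta x ord_max ord0 = Complex (crd x 6) (crd x 7)].
Proof. by rewrite !mxE. Qed.

End ComplexCoordinates.

Section SymplecticStructure.
Variable R : realType.
Implicit Types (x u v : 'rV[R]_8).

Lemma OmegaE u v : Omega u v =
  2 * (crd u 4 * crd v 0 + crd u 5 * crd v 1 + crd u 6 * crd v 2 + crd u 7 * crd v 3)
  - 2 * (crd u 0 * crd v 4 + crd u 1 * crd v 5 + crd u 2 * crd v 6 + crd u 3 * crd v 7).
Proof.
rewrite /Omega !hformE; case: (theta_zetaE u) => -> -> -> ->.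
by case: (theta_zetaE v) => -> -> -> ->; rewrite !mxE /=; ring.
Qed.

Lemma Omega_anti u v : Omega u v = - Omega v u.
Proof. rewrite !OmegaE; ring. Qed.

Lemma Omega_self u : Omega u u = 0.
Proof. rewrite OmegaE; ring. Qed.

Lemma OmegaBZl u w v a : Omega (u - a *: w) v = Omega u v - a * Omega w v.
Proof. rewrite !OmegaE !crdBZ; ring. Qed.

(* Omega^{-1} applied to a covector l : the unique Y with Omega(Y, .) = l. *)
Definition hamOmega (l : 'rV[R]_8 -> R) : 'rV[R]_8 :=
  vrow 7 (fun k => if (k < 4)%N then - l (ebasis 7 k.+4) / 2 else l (ebasis 7 (k - 4)%N) / 2).

Lemma Omega_hamOmega (l : {linear 'rV[R]_8 -> R^o}) v : Omega (hamOmega l) v = l v.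
Proof.
rewrite {2}(row_sum_ebasis v) linear_sum !big_ord_recr big_ord0 /= !linearZ /= /GRing.scale /=.
rewrite OmegaE /hamOmega !crd_vrow //= ?subSS ?subn0; by field.
Qed.

Lemma Omega_hamOmega_quad Q L x v : Omega (hamOmega (dquad Q L x)) v = dquad Q L x v.
Proof. by rewrite -diff_quadE Omega_hamOmega. Qed.

Lemma hamOmega_quad Q x : all (fun m => (m.1.2 <= 7) && (m.2 <= 7))%N Q ->
  hamOmega (dquad Q [::] x) =
  vrow 7 (fun k => if (k < 4)%N then - grad Q [::] x k.+4 / 2 else grad Q [::] x (k - 4)%N / 2).
Proof. by move=> hQ; congr vrow; apply/funext => k; rewrite !dquad_ebasis. Qed.

Lemma hamiltonian_quad T Q x :
  T (hamOmega (dquad Q [::] x)) ->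
  hamiltonian_at T (@Omega R) x (quad Q [::]) (hamOmega (dquad Q [::] x)).
Proof. by move=> TY; split=> // v _; rewrite Omega_hamOmega_quad diff_quad. Qed.

End SymplecticStructure.

Section MomentumMap.
Variable R : realType.
Implicit Types (x v : 'rV[R]_8).

Definition Je_quad (a : nat) : seq (R * nat * nat) :=
  match a with
  | 0%N => [:: (1, 0%N, 7%N); (-1, 1%N, 6%N); (1, 2%N, 5%N); (-1, 3%N, 4%N)]
  | 1%N => [:: (1, 0%N, 6%N); (1, 1%N, 7%N); (-1, 2%N, 4%N); (-1, 3%N, 5%N)]
  | 2%N => [:: (1, 0%N, 5%N); (-1, 1%N, 4%N); (-1, 2%N, 7%N); (1, 3%N, 6%N)]
  | 3%N => [:: (-2, 4%N, 6%N); (-2, 5%N, 7%N)]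
  | 4%N => [:: (2, 4%N, 7%N); (-2, 5%N, 6%N)]
  | 5%N => [:: (-1, 4%N, 4%N); (-1, 5%N, 5%N); (1, 6%N, 6%N); (1, 7%N, 7%N)]
  | _ => [::]
  end.
Definition J0_quad : seq (R * nat * nat) :=
  [:: (1, 0%N, 5%N); (-1, 1%N, 4%N); (1, 2%N, 7%N); (-1, 3%N, 6%N)].
Definition G0_quad : seq (R * nat * nat) :=
  [:: (-1, 4%N, 4%N); (-1, 5%N, 5%N); (-1, 6%N, 6%N); (-1, 7%N, 7%N)].
Definition cS1_quad : seq (R * nat * nat) :=
  [:: (1, 4%N, 4%N); (1, 5%N, 5%N); (1, 6%N, 6%N); (1, 7%N, 7%N)].
Definition cS2_quad : seq (R * nat * nat) :=
  [:: (2, 0%N, 4%N); (2, 1%N, 5%N); (2, 2%N, 6%N); (2, 3%N, 7%N)].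

Ltac expand_hforms x :=
  rewrite /J0 /G0 /cS2 /Jup /Gup !hformE;
  let h1 := fresh in let h2 := fresh in let h3 := fresh in let h4 := fresh in
  case: (theta_zetaE x) => h1 h2 h3 h4; rewrite ?h1 ?h2 ?h3 ?h4 {h1 h2 h3 h4};
  rewrite /quad /sigma /sigma1 /sigma2 /sigma3 !mxE /=.

Lemma Je_vrow x : Je x = vrow 5 (fun k => quad (Je_quad k) [::] x).
Proof.
apply/rowP => i; rewrite /Je /vrow !mxE.
by case: i => [[|[|[|[|[|[|//]]]]]] Hi]; expand_hforms x; field.
Qed.

Lemma J0E : @J0 R = quad J0_quad [::].
Proof. by apply/funext => x; expand_hforms x; field. Qed.

Lemma G0E : @G0 R = quad G0_quad [::].
Proof. by apply/funext => x; expand_hforms x; field. Qed.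

Lemma cS2E : @cS2 R = quad cS2_quad [::].
Proof. by apply/funext => x; expand_hforms x; field. Qed.

Lemma cS1E : @cS1 R = quad cS1_quad [::].
Proof. by apply/funext => x; rewrite /cS1; expand_hforms x; field. Qed.

End MomentumMap.
Arguments Je_quad {R} a.
Arguments J0_quad {R}.
Arguments G0_quad {R}.
Arguments cS1_quad {R}.
Arguments cS2_quad {R}.

Section Brackets.
Variable R : realType.
Implicit Types (x : 'rV[R]_8).

Lemma crd_Je x k : (k <= 5)%N -> crd (Je x) k = quad (Je_quad k) [::] x.
Proof. by move=> hk; rewrite Je_vrow crd_vrow. Qed.

Ltac eval_bracket := rewrite hamOmega_quad // /dquad /= !crd_vrow //= ?subSS ?subn0 /grad /=.

Lemma Je_bracket x (a b : 'I_6) :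
  dquad (Je_quad a) [::] x (hamOmega (dquad (Je_quad b) [::] x)) = Defs.piE (Je x) a b.
Proof.
rewrite /Defs.piE.
case: a => [[|[|[|[|[|[|//]]]]]] Ha]; case: b => [[|[|[|[|[|[|//]]]]]] Hb];
rewrite /= ?big_ord_recr ?big_ord0 /= ?subSS ?subn0 ?addn0 ?addnS ?addn0 ?crd_Je //;
eval_bracket; rewrite /quad /eps /=; by field.
Qed.

Lemma Je_J0_bracket x (a : 'I_6) :
  dquad (Je_quad a) [::] x (hamOmega (dquad J0_quad [::] x)) = 0.
Proof. by case: a => [[|[|[|[|[|[|//]]]]]] Ha]; eval_bracket; field. Qed.

Lemma Je_G0_bracket x (a : 'I_6) :
  dquad (Je_quad a) [::] x (hamOmega (dquad G0_quad [::] x)) = 0.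
Proof. by case: a => [[|[|[|[|[|[|//]]]]]] Ha]; eval_bracket; field. Qed.

Lemma J0_G0_bracket x : dquad J0_quad [::] x (hamOmega (dquad G0_quad [::] x)) = 0.
Proof. by eval_bracket; field. Qed.

Lemma cS2_G0_bracket x :
  dquad cS2_quad [::] x (hamOmega (dquad G0_quad [::] x)) = - 2 * G0 x.
Proof. by rewrite G0E; eval_bracket; rewrite /quad /=; field. Qed.

Lemma dquad_cS1 x v : dquad cS1_quad [::] x v = - dquad G0_quad [::] x v.
Proof. by rewrite /dquad /=; ring. Qed.

Lemma K1_Je x : K1 (Je x) = J0 x * G0 x.
Proof.
by rewrite /K1 !big_ord_recr big_ord0 /= !crd_Je // J0E G0E /quad /=; ring.
Qed.

Lemma K2_Je x : K2 (Je x) = G0 x ^+ 2.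
Proof. by rewrite /K2 !big_ord_recr big_ord0 /= !crd_Je // G0E /quad /=; ring. Qed.

End Brackets.

Section MomentumMapCommute.
Variable R : realType.
Implicit Types (x : 'rV[R]_8) (F G : 'rV[R]_6 -> R).

Let Omega_anti_setT x : forall u v, [set: 'rV[R]_8] u -> [set: 'rV[R]_8] v ->
  Omega u v = - Omega v u.
Proof. by move=> u v _ _; exact: Omega_anti. Qed.

Lemma Je_poisson_commute x F G :
  (forall w, differentiable F w) -> (forall w, differentiable G w) ->
  LP_bracket F G (Je x) = 0 ->
  poisson_commute_at [set: 'rV[R]_8] (@Omega R) (F \o @Je R) (G \o @Je R) x.
Proof.
apply: (poisson_map_commute (Omega_anti_setT x) (@Je_vrow R)) => [k|b|a b].
- exact: differentiable_quad.
- exact: hamiltonian_quad.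
- by rewrite diff_quad Je_bracket.
Qed.

Lemma Je_casimir_commute x F Q :
  (forall a : 'I_6, dquad (Je_quad a) [::] x (hamOmega (dquad Q [::] x)) = 0) ->
  (forall w, differentiable F w) ->
  poisson_commute_at [set: 'rV[R]_8] (@Omega R) (F \o @Je R) (quad Q [::]) x.
Proof.
move=> hQ; apply: (casimir_commute (Omega_anti_setT x) (@Je_vrow R)) => [k||a].
- exact: differentiable_quad.
- exact: hamiltonian_quad.
- by rewrite diff_quad hQ.
Qed.

Lemma Je_commute_J0 x F :
  (forall w, differentiable F w) ->
  poisson_commute_at [set: 'rV[R]_8] (@Omega R) (F \o @Je R) (@J0 R) x.
Proof. by rewrite J0E; exact/Je_casimir_commute/Je_J0_bracket. Qed.

Lemma Je_commute_G0 x F :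
  (forall w, differentiable F w) ->
  poisson_commute_at [set: 'rV[R]_8] (@Omega R) (F \o @Je R) (@G0 R) x.
Proof. by rewrite G0E; exact/Je_casimir_commute/Je_G0_bracket. Qed.

Lemma J0_commute_G0 x : poisson_commute_at [set: 'rV[R]_8] (@Omega R) (@J0 R) (@G0 R) x.
Proof.
rewrite J0E G0E; apply: (poisson_commute_hamiltonian (Omega_anti_setT x)).
  exact: hamiltonian_quad.
by rewrite diff_quad J0_G0_bracket.
Qed.

End MomentumMapCommute.

Section ReducedSpace.
Variables (R : realType) (nu : R) (x : 'rV[R]_8).
Hypotheses (nu_lt0 : nu < 0) (Snu_x : S_nu nu x).

Local Notation Z := (hamOmega (dquad G0_quad [::] x)).

Lemma G0_Snu : G0 x = nu.
Proof. by case: Snu_x => _ [hz _]; rewrite /G0 raddfN /= hz /= opprK. Qed.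

Lemma TS_quad v :
  TS x v <-> dquad G0_quad [::] x v = 0 /\ dquad cS2_quad [::] x v = 0.
Proof.
rewrite /TS /= cS1E cS2E !diff_quad dquad_cS1.
by split=> -[h1 h2]; split=> //; apply/eqP; move/eqP: h1; rewrite oppr_eq0.
Qed.

(* Y_Q corrected along Z, the Hamiltonian field of Gamma^0, so as to become
   tangent to S_nu; Z is transverse to the level sets of [cS2]. *)
Definition tangent_ham Q : 'rV[R]_8 :=
  hamOmega (dquad Q [::] x)
  - (dquad cS2_quad [::] x (hamOmega (dquad Q [::] x)) / dquad cS2_quad [::] x Z) *: Z.

Lemma cS2_Z : dquad cS2_quad [::] x Z != 0.
Proof.
by rewrite cS2_G0_bracket G0_Snu mulf_eq0 negb_or oppr_eq0 pnatr_eq0 (lt_eqF nu_lt0).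
Qed.

Lemma dquad_tangent_ham Q' Q : dquad Q' [::] x Z = 0 ->
  dquad Q' [::] x (tangent_ham Q) = dquad Q' [::] x (hamOmega (dquad Q [::] x)).
Proof. by move=> hZ; rewrite /tangent_ham dquadBZ hZ mulr0 subr0. Qed.

Lemma hamiltonian_tangent_ham Q :
  dquad Q [::] x Z = 0 -> hamiltonian_at (TS x) (@Omega R) x (quad Q [::]) (tangent_ham Q).
Proof.
have G0Z : dquad G0_quad [::] x Z = 0 by rewrite -Omega_hamOmega_quad Omega_self.
move=> QZ; split.
  apply/TS_quad; split.
    by rewrite dquad_tangent_ham // -Omega_hamOmega_quad Omega_anti Omega_hamOmega_quad QZ oppr0.
  by rewrite /tangent_ham dquadBZ divfK ?subrr //; exact: cS2_Z.
move=> v /TS_quad [G0v _].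
by rewrite /tangent_ham OmegaBZl !Omega_hamOmega_quad G0v mulr0 subr0 diff_quad.
Qed.

Let Omega_anti_TS : forall u v, TS x u -> TS x v -> Omega u v = - Omega v u.
Proof. by move=> u v _ _; exact: Omega_anti. Qed.

Lemma Snu_poisson_commute (F G : 'rV[R]_6 -> R) :
  (forall w, differentiable F w) -> (forall w, differentiable G w) ->
  LP_bracket F G (Je x) = 0 ->
  poisson_commute_at (TS x) (@Omega R) (F \o @Je R) (G \o @Je R) x.
Proof.
apply: (poisson_map_commute Omega_anti_TS (@Je_vrow R)) => [k|b|a b].
- exact: differentiable_quad.
- exact/hamiltonian_tangent_ham/Je_G0_bracket.
- by rewrite diff_quad dquad_tangent_ham ?Je_bracket ?Je_G0_bracket.
Qed.

Lemma Snu_commute_J0 (F : 'rV[R]_6 -> R) :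
  (forall w, differentiable F w) ->
  poisson_commute_at (TS x) (@Omega R) (F \o @Je R) (@J0 R) x.
Proof.
rewrite J0E; apply: (casimir_commute Omega_anti_TS (@Je_vrow R)) => [k||a].
- exact: differentiable_quad.
- exact/hamiltonian_tangent_ham/J0_G0_bracket.
- by rewrite diff_quad dquad_tangent_ham ?Je_J0_bracket ?Je_G0_bracket.
Qed.

End ReducedSpace.

Section HopfCoordinates.
Variable R : realType.
Implicit Types (q u : 'rV[R]_7).

Definition proj_quad (k : nat) : seq (R * nat * nat) :=
  match k with
  | 3%N => [:: (2, 3%N, 5%N); (2, 4%N, 6%N)]
  | 4%N => [:: (-2, 3%N, 6%N); (2, 4%N, 5%N)]
  | 5%N => [:: (1, 3%N, 3%N); (1, 4%N, 4%N); (-1, 5%N, 5%N); (-1, 6%N, 6%N)]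
  | _ => [::]
  end.
Definition proj_lin (k : nat) : seq (R * nat) :=
  match k with
  | 0%N => [:: (-1, 1%N)]
  | 1%N => [:: (-1, 2%N)]
  | 2%N => [:: (-1, 0%N)]
  | _ => [::]
  end.

Definition normz_quad : seq (R * nat * nat) :=
  [:: (1, 3%N, 3%N); (1, 4%N, 4%N); (1, 5%N, 5%N); (1, 6%N, 6%N)].
Definition normz q : R := quad normz_quad [::] q.

(* Phi = (P zeta - i mu zeta / |zeta|^2, zeta): the quadratic part of P zeta,
   the linear part zeta, and the numerator of the mu-term. *)
Definition Phi_quad (k : nat) : seq (R * nat * nat) :=
  match k with
  | 0%N => [:: (1, 0%N, 3%N); (1, 1%N, 5%N); (-1, 2%N, 6%N)]
  | 1%N => [:: (1, 0%N, 4%N); (1, 1%N, 6%N); (1, 2%N, 5%N)]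
  | 2%N => [:: (-1, 0%N, 5%N); (1, 1%N, 3%N); (1, 2%N, 4%N)]
  | 3%N => [:: (-1, 0%N, 6%N); (1, 1%N, 4%N); (-1, 2%N, 3%N)]
  | _ => [::]
  end.
Definition Phi_lin (k : nat) : seq (R * nat) :=
  match k with
  | 4%N => [:: (1, 3%N)]
  | 5%N => [:: (1, 4%N)]
  | 6%N => [:: (1, 5%N)]
  | 7%N => [:: (1, 6%N)]
  | _ => [::]
  end.
Definition Phi_mu_lin (k : nat) : seq (R * nat) :=
  match k with
  | 0%N => [:: (1, 4%N)]
  | 1%N => [:: (-1, 3%N)]
  | 2%N => [:: (1, 6%N)]
  | 3%N => [:: (-1, 5%N)]
  | _ => [::]
  end.

Definition Phi_crd mu k q : R :=
  quad (Phi_quad k) (Phi_lin k) q + mu * (quad [::] (Phi_mu_lin k) q / normz q).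

Lemma projE q : Defs.proj q = vrow 5 (fun k => quad (proj_quad k) (proj_lin k) q).
Proof.
apply/rowP => i; rewrite /Defs.proj /vrow !mxE /mxtrace.
by case: i => [[|[|[|[|[|[|//]]]]]] Hi] /=;
  rewrite !(mxE, big_ord_recr, big_ord0) /= ?widen_ord_max_2 /quad /=; field.
Qed.

Lemma normzE q : complex.Re (hform (zetaof q) 1%:M (zetaof q)) = normz q.
Proof. by rewrite hformE !mxE /= /normz /quad /=; ring. Qed.

Lemma PhiE mu q : Phi mu q = vrow 7 (fun k => Phi_crd mu k q).
Proof.
apply/rowP => i; rewrite /Phi /toR8 /vrow !mxE normzE.
have i0 : inord 0 = ord0 :> 'I_2 by apply: val_inj; rewrite /= inordK.
have i1 : inord 1 = ord_max :> 'I_2 by apply: val_inj; rewrite /= inordK.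
by case: i => [[|[|[|[|[|[|[|[|//]]]]]]]] Hi] /=; rewrite ?i0 ?i1
  !(mxE, big_ord_recr, big_ord0) /= ?widen_ord_max_2 /Phi_crd /quad /=; ring.
Qed.

End HopfCoordinates.
Arguments proj_quad {R} k.
Arguments proj_lin {R} k.
Arguments normz_quad {R}.
Arguments Phi_quad {R} k.
Arguments Phi_lin {R} k.
Arguments Phi_mu_lin {R} k.

Section HopfDifferentials.
Variable R : realType.
Implicit Types (q u : 'rV[R]_7).

Definition dPhi_crd mu k q u : R :=
  dquad (Phi_quad k) (Phi_lin k) q u
  + mu * ((dquad [::] (Phi_mu_lin k) q u * normz q
           - quad [::] (Phi_mu_lin k) q * dquad normz_quad [::] q u) / normz q ^+ 2).

Lemma is_diff_Phi_crd mu k q : normz q != 0 -> is_diff q (Phi_crd mu k) (dPhi_crd mu k q).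
Proof.
move=> nz.
have hV : is_diff q (fun y => (normz y)^-1) (- (normz q) ^- 2 \*: dquad normz_quad [::] q).
  apply: DiffDef; first exact: differentiableV (differentiable_quad _ _ _) nz.
  by rewrite diffV ?diff_quadE //; exact: differentiable_quad.
have hM := is_diffZ mu (is_diffM (is_diff_quad [::] (Phi_mu_lin k) q) hV).
apply: is_diff_eq (is_diffD (is_diff_quad (Phi_quad k) (Phi_lin k) q) hM) _.
apply/funext => v; rewrite /dPhi_crd /=.
change (dquad (Phi_quad k) (Phi_lin k) q v
  + mu * (quad [::] (Phi_mu_lin k) q * (- (normz q) ^- 2 * dquad normz_quad [::] q v)
          + (normz q)^-1 * dquad [::] (Phi_mu_lin k) q v)
  = dPhi_crd mu k q v).
by rewrite /dPhi_crd; field.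
Qed.

Lemma diff_Phi mu q : normz q != 0 ->
  differentiable (Phi mu) q /\ forall u, 'd (Phi mu) q u = vrow 7 (fun k => dPhi_crd mu k q u).
Proof.
move=> nz; have dPhi_crd_q k := is_diff_Phi_crd mu k nz.
have h : is_diff q (Phi mu) (fun u => vrow 7 (fun k => 'd (Phi_crd mu k) q u)).
  by rewrite (funext (PhiE mu)); exact: is_diff_vrow.
split; first exact: ex_diff.
by move=> u; rewrite diff_val; congr vrow; apply/funext => k; rewrite diff_val.
Qed.

Lemma diff_proj q :
  differentiable (@Defs.proj R) q /\
  forall u, 'd (@Defs.proj R) q u = vrow 5 (fun k => dquad (proj_quad k) (proj_lin k) q u).
Proof.
have h : is_diff q (@Defs.proj R)
    (fun u => vrow 5 (fun k => 'd (quad (proj_quad k) (proj_lin k)) q u)).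
  by rewrite (funext (@projE R)); apply: is_diff_vrow => k; exact: differentiable_quad.
split; first exact: ex_diff.
by move=> u; rewrite diff_val; congr vrow; apply/funext => k; rewrite diff_quad.
Qed.

End HopfDifferentials.

Section Lifts.
Variable R : realType.
Implicit Types (q : 'rV[R]_7) (v : 'rV[R]_6).

(* Tangent vectors at q that dPhi maps to the Hamiltonian fields of the
   components of J_e at Phi q. *)
Definition Phi_lift (b : nat) q : 'rV[R]_7 :=
  vrow 6 (nth 0 (match b with
    | 0%N => [:: - crd q 2; 0; crd q 0; crd q 6 / 2; - crd q 5 / 2; crd q 4 / 2; - crd q 3 / 2]
    | 1%N => [:: crd q 1; - crd q 0; 0; crd q 5 / 2; crd q 6 / 2; - crd q 3 / 2; - crd q 4 / 2]
    | 2%N => [:: 0; crd q 2; - crd q 1; crd q 4 / 2; - crd q 3 / 2; - crd q 6 / 2; crd q 5 / 2]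
    | 3%N => [:: 0; 1; 0; 0; 0; 0; 0]
    | 4%N => [:: 0; 0; 1; 0; 0; 0; 0]
    | _ => [:: 1; 0; 0; 0; 0; 0; 0]
    end)).

Definition dproj_inv q v : 'rV[R]_7 :=
  vrow 6 (nth 0 [:: - crd v 2; - crd v 0; - crd v 1;
    (crd q 3 * crd v 5 + crd q 5 * crd v 3 - crd q 6 * crd v 4) / (2 * normz q);
    (crd q 4 * crd v 5 + crd q 5 * crd v 4 + crd q 6 * crd v 3) / (2 * normz q);
    (crd q 3 * crd v 3 + crd q 4 * crd v 4 - crd q 5 * crd v 5) / (2 * normz q);
    (crd q 4 * crd v 3 - crd q 3 * crd v 4 - crd q 6 * crd v 5) / (2 * normz q)]).

Lemma normz_expand q :
  normz q = crd q 3 * crd q 3 + (crd q 4 * crd q 4 + (crd q 5 * crd q 5 + crd q 6 * crd q 6)).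
Proof. by rewrite /normz /quad /=; ring. Qed.

Lemma crd_Phi mu q j : (j <= 7)%N -> crd (Phi mu q) j = Phi_crd mu j q.
Proof. by move=> hj; rewrite PhiE crd_vrow. Qed.

Lemma dPhi_lift mu q b : normz q != 0 -> (b < 6)%N ->
  'd (Phi mu) q (Phi_lift b q) = hamOmega (dquad (Je_quad b) [::] (Phi mu q)).
Proof.
move=> nz hb; have [_ ->] := diff_Phi mu nz.
apply: row_eq_crd => i hi.
case: b hb => [|[|[|[|[|[|//]]]]]] _; rewrite hamOmega_quad // !crd_vrow //;
case: i hi => [|[|[|[|[|[|[|[|//]]]]]]]] _ /=; rewrite ?subSS ?subn0 /grad /=
  ?crd_Phi // /dPhi_crd /Phi_crd /Phi_lift /dquad /quad /= !crd_vrow //=; by field.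
Qed.

Lemma dproj_dproj_inv q v : normz q != 0 -> 'd (@Defs.proj R) q (dproj_inv q v) = v.
Proof.
move=> nz; have [_ ->] := diff_proj q.
apply: row_eq_crd => i hi; rewrite crd_vrow //.
case: i hi => [|[|[|[|[|[|//]]]]]] _; rewrite /dproj_inv /dquad /= !crd_vrow //=;
  rewrite normz_expand in nz *; by field.
Qed.

End Lifts.

Section MomentumMapMu.
Variable R : realType.
Implicit Types (x : 'rV[R]_6) (q : 'rV[R]_7).

Definition Jemu_crd mu k x : R :=
  if (k < 3)%N then \sum_(l < 3) \sum_(m < 3) eps R k l m * yvec x l * pvec x m
                    + mu * yvec x k / ynorm x
  else - yvec x (k - 3).

Lemma JemuE mu x : Jemu mu x = vrow 5 (fun k => Jemu_crd mu k x).
Proof. by apply/rowP => i; rewrite !mxE. Qed.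

Lemma crd_proj q j : (j <= 5)%N -> crd (Defs.proj q) j = quad (proj_quad j) (proj_lin j) q.
Proof. by move=> hj; rewrite projE crd_vrow. Qed.

Lemma normz_ge0 q : 0 <= normz q.
Proof. by rewrite normz_expand -!expr2 !addr_ge0 ?sqr_ge0. Qed.

Lemma ysq_proj q : ysq (Defs.proj q) = normz q ^+ 2.
Proof.
rewrite /ysq !big_ord_recr big_ord0 /= /yvec !crd_proj // normz_expand /quad /=; ring.
Qed.

Lemma ynorm_proj q : ynorm (Defs.proj q) = normz q.
Proof. by rewrite /ynorm ysq_proj sqrtr_sqr ger0_norm // normz_ge0. Qed.

(* The mu-terms on both sides carry the same factor 1 / |zeta|^2, so the
   identity also holds where zeta = 0 (both sides then use x / 0 = 0). *)
Lemma Jemu_crd_proj mu q k : (k < 6)%N ->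
  Jemu_crd mu k (Defs.proj q) = quad (Je_quad k) [::] (Phi mu q).
Proof.
have [z|nz] := eqVneq (normz q) 0;
case: k => [|[|[|[|[|[|//]]]]]] _;
rewrite /Jemu_crd /= ?big_ord_recr ?big_ord0 /= /yvec /pvec ?ynorm_proj ?subSS ?subn0
  ?addn0 ?addnS ?addn0 !crd_proj // /quad /= !crd_Phi // /Phi_crd /quad /eps /=;
  rewrite ?z ?invr0; by field.
Qed.

Lemma Jemu_proj mu q : Jemu mu (Defs.proj q) = Je (Phi mu q).
Proof.
rewrite JemuE Je_vrow; apply: row_eq_crd => k hk.
by rewrite !crd_vrow // Jemu_crd_proj.
Qed.

Definition ysq_quad : seq (R * nat * nat) := [:: (1, 3%N, 3%N); (1, 4%N, 4%N); (1, 5%N, 5%N)].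

Lemma ysqE : @ysq R = quad ysq_quad [::].
Proof. by apply/funext => x; rewrite /ysq !big_ord_recr big_ord0 /= /yvec /quad /=; ring. Qed.

Definition cross_quad (k : nat) : seq (R * nat * nat) :=
  match k with
  | 0%N => [:: (-1, 1%N, 5%N); (1, 2%N, 4%N)]
  | 1%N => [:: (1, 0%N, 5%N); (-1, 2%N, 3%N)]
  | 2%N => [:: (-1, 0%N, 4%N); (1, 1%N, 3%N)]
  | _ => [::]
  end.

Lemma Jemu_crdE mu k x : (k < 3)%N ->
  Jemu_crd mu k x = quad (cross_quad k) [::] x + mu * (crd x (3 + k) / ynorm x).
Proof.
move=> hk; rewrite /Jemu_crd hk /yvec /=; have [->|nz] := eqVneq (ynorm x) 0;
by case: k hk => [|[|[|//]]] _; rewrite !big_ord_recr !big_ord0 /= /pvec /yvec /eps /quad /=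
  ?invr0; field.
Qed.

Lemma differentiable_ynorm x : ysq x != 0 -> differentiable (@ynorm R) x.
Proof.
move=> nz; have ypos : 0 < ysq x by rewrite lt_def nz ysqE /quad /=; nra.
have dsq : differentiable (@Num.sqrt R) (ysq x).
  by apply/derivable1_diffP; exact: (@ex_derive _ _ _ _ _ _ _ (is_derive1_sqrt ypos)).
have -> : @ynorm R = Num.sqrt \o quad ysq_quad [::] by rewrite /ynorm ysqE.
by apply: differentiable_comp; [exact: differentiable_quad | rewrite -ysqE].
Qed.

Lemma differentiable_Jemu_crd mu k x : ysq x != 0 -> differentiable (Jemu_crd mu k) x.
Proof.
move=> nz; have dc j : differentiable (fun y : 'rV[R]_6 => crd y j) x.
  by have h := is_diff_crd j x; exact: ex_diff.
case: (ltnP k 3) => hk.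
  have -> : Jemu_crd mu k = quad (cross_quad k) [::]
      + mu *: ((fun y => crd y (3 + k)) * (fun y => (ynorm y)^-1)).
    by apply/funext => y; rewrite Jemu_crdE.
  apply: differentiableD; first exact: differentiable_quad.
  apply/differentiableZ/differentiableM; first exact: dc.
  apply: differentiableV; first exact: differentiable_ynorm.
  by rewrite /ynorm sqrtr_eq0 -ltNge lt_def nz ysqE /quad /=; nra.
have -> : Jemu_crd mu k = - (fun y => crd y (3 + (k - 3))).
  by apply/funext => y; rewrite /Jemu_crd ltnNge hk.
exact/differentiableN/dc.
Qed.

End MomentumMapMu.

Section HopfPreimage.
Variable R : rcfType.

Lemma hopf_preimage (y1 y2 y3 : R) : exists a b c d : R,
  [/\ 2 * (a * c + b * d) = y1, 2 * (b * c - a * d) = y2 & a * a + b * b - c * c - d * d = y3].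
Proof.
set r := Num.sqrt (y1 * y1 + y2 * y2 + y3 * y3).
have r0 : 0 <= r by exact: sqrtr_ge0.
have r2 : r * r = y1 * y1 + y2 * y2 + y3 * y3 by rewrite -expr2 sqr_sqrtr //; nra.
have [pos|npos] := ltP 0 (r + y3).
  set a := Num.sqrt ((r + y3) / 2).
  have a2 : a * a = (r + y3) / 2 by rewrite -expr2 sqr_sqrtr // divr_ge0 // ltW.
  have a0 : a != 0 by rewrite sqrtr_eq0 -ltNge divr_gt0.
  exists a, 0, (y1 / (2 * a)), (- y2 / (2 * a)); split; try by field.
  have e : y1 * y1 + y2 * y2 = (r + y3) * (r - y3) by nra.
  have -> : a * a + 0 * 0 - y1 / (2 * a) * (y1 / (2 * a)) - - y2 / (2 * a) * (- y2 / (2 * a))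
      = a * a - (y1 * y1 + y2 * y2) / (4 * (a * a)) by field.
  by rewrite e a2; field; rewrite gt_eqF.
have y1_0 : y1 = 0 by nra.
have y2_0 : y2 = 0 by nra.
have sr : Num.sqrt r * Num.sqrt r = r by rewrite -expr2 sqr_sqrtr.
by exists 0, 0, 0, (Num.sqrt r); split; rewrite ?y1_0 ?y2_0 ?sr; nra.
Qed.

End HopfPreimage.

Section ProjSurjective.
Variable R : realType.

Definition proj_pre (a b c d : R) (x : 'rV[R]_6) : 'rV[R]_7 :=
  vrow 6 (nth 0 [:: - crd x 2; - crd x 0; - crd x 1; a; b; c; d]).

Lemma proj_proj_pre a b c d (x : 'rV[R]_6) :
  2 * (a * c + b * d) = crd x 3 -> 2 * (b * c - a * d) = crd x 4 ->
  a * a + b * b - c * c - d * d = crd x 5 -> Defs.proj (proj_pre a b c d x) = x.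
Proof.
move=> e3 e4 e5; apply: row_eq_crd => k hk; rewrite crd_proj //.
case: k hk => [|[|[|[|[|[|//]]]]]] _; rewrite /quad /proj_pre /= !crd_vrow //=;
  by [ring | rewrite -e3; ring | rewrite -e4; ring | rewrite -e5; ring].
Qed.

Lemma proj_surj (x : 'rV[R]_6) : ysq x != 0 ->
  exists2 q, Defs.proj q = x & normz q != 0.
Proof.
move=> nz; have [a [b [c [d [e3 e4 e5]]]]] := hopf_preimage (crd x 3) (crd x 4) (crd x 5).
have hq := proj_proj_pre e3 e4 e5; exists (proj_pre a b c d x) => //.
by apply: contra nz => /eqP z; rewrite -hq ysq_proj z expr0n.
Qed.

End ProjSurjective.

Section K2Casimir.
Variable R : realType.

Lemma K2_ysq : @K2 R = @ysq R.
Proof. by []. Qed.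

Lemma K2_casimir (w : 'rV[R]_6) (a : 'I_6) :
  \sum_(b < 6) Defs.piE w a b * pd (@K2 R) w b = 0.
Proof.
rewrite /pd K2_ysq ysqE.
case: a => [[|[|[|[|[|[|//]]]]]] Ha]; rewrite !big_ord_recr big_ord0 /= !diff_quad
  /dquad /= !crd_delta //= /Defs.piE /= ?big_ord_recr ?big_ord0 /= ?subSS ?subn0 /eps /=;
  by field.
Qed.

Lemma LP_bracket_K2 (F : 'rV[R]_6 -> R) w : LP_bracket F (@K2 R) w = 0.
Proof.
rewrite /LP_bracket; apply: big1 => a _.
under eq_bigr do rewrite mulrAC.
by rewrite -mulr_suml K2_casimir mul0r.
Qed.

Lemma K2_Jemu mu (x : 'rV[R]_6) : K2 (Jemu mu x) = ysq x.
Proof.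
rewrite /K2 /ysq; apply: eq_bigr => k _.
have hk : (3 + k <= 5)%N by case: k => [[|[|[|//]]]].
by rewrite JemuE crd_vrow // /Jemu_crd ltnNge leq_addr /= addKn sqrrN.
Qed.

End K2Casimir.

Section ReducedMomentumMap.
Variables (R : realType) (mu : R) (om : 'rV[R]_6 -> 'rV[R]_6 -> 'rV[R]_6 -> R).
Hypothesis om_Omega_mu : is_Omega_mu mu om.
Variable q : 'rV[R]_7.
Hypothesis normz_neq0 : normz q != 0.

Local Notation x := (Defs.proj q).

Let ysq_neq0 : ysq x != 0.
Proof. by rewrite ysq_proj expf_neq0. Qed.

Let zeta_neq0 : zetaof q != 0.
Proof.
apply: contra normz_neq0 => /eqP z.
have : zetaof q ord0 ord0 = 0 /\ zetaof q ord_max ord0 = 0 by rewrite z !mxE.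
rewrite !mxE /= => -[[h3 h4] [h5 h6]].
by rewrite normz_expand h3 h4 h5 h6 !mul0r !addr0.
Qed.

Local Notation om' := (om x).
Local Notation dproj := ('d (@Defs.proj R) q).
Local Notation dPhi := ('d (Phi mu) q).

Let om'E u v : om' (dproj u) (dproj v) = Omega (dPhi u) (dPhi v).
Proof. exact: om_Omega_mu. Qed.

Let om'_anti : forall u v, [set: 'rV[R]_6] u -> [set: 'rV[R]_6] v -> om' u v = - om' v u.
Proof.
move=> u v _ _; rewrite -(dproj_dproj_inv u normz_neq0) -(dproj_dproj_inv v normz_neq0).
by rewrite !om'E Omega_anti.
Qed.

Lemma diff_Jemu_crd_proj a w : (a < 6)%N ->
  'd (Jemu_crd mu a) x (dproj w) = dquad (Je_quad a) [::] (Phi mu q) (dPhi w).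
Proof.
move=> ha; have [dpr _] := diff_proj q; have [dPh _] := diff_Phi mu normz_neq0.
have dJ := differentiable_Jemu_crd mu a ysq_neq0.
have -> : 'd (Jemu_crd mu a) x (dproj w) = 'd (Jemu_crd mu a \o @Defs.proj R) q w.
  by rewrite diff_comp.
have -> : Jemu_crd mu a \o @Defs.proj R = quad (Je_quad a) [::] \o Phi mu.
  by apply/funext => y /=; rewrite Jemu_crd_proj.
rewrite diff_comp //; last exact: differentiable_quad.
by rewrite /comp diff_quad.
Qed.

Definition Jemu_ham (b : 'I_6) : 'rV[R]_6 := dproj (Phi_lift b q).

Lemma hamiltonian_Jemu_ham (b : 'I_6) :
  hamiltonian_at [set: 'rV[R]_6] om' x (Jemu_crd mu b) (Jemu_ham b).
Proof.
split=> // v _; rewrite -(dproj_dproj_inv v normz_neq0) om'E dPhi_lift //.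
by rewrite Omega_hamOmega_quad diff_Jemu_crd_proj.
Qed.

Lemma Jemu_ham_bracket (a b : 'I_6) :
  'd (Jemu_crd mu a) x (Jemu_ham b) = Defs.piE (Jemu mu x) a b.
Proof. by rewrite diff_Jemu_crd_proj // dPhi_lift // Je_bracket Jemu_proj. Qed.

Lemma Jemu_poisson_commute_at (F G : 'rV[R]_6 -> R) :
  (forall w, differentiable F w) -> (forall w, differentiable G w) ->
  LP_bracket F G (Jemu mu x) = 0 ->
  poisson_commute_at [set: 'rV[R]_6] om' (F \o Jemu mu) (G \o Jemu mu) x.
Proof.
apply: (poisson_map_commute om'_anti (JemuE mu)) => [k|b|a b].
- exact: differentiable_Jemu_crd.
- exact: hamiltonian_Jemu_ham.
- exact: Jemu_ham_bracket.
Qed.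

End ReducedMomentumMap.

Lemma Jemu_poisson_commute (R : realType) (mu : R) om (x : 'rV[R]_6) (F G : 'rV[R]_6 -> R) :
  is_Omega_mu mu om -> ysq x != 0 ->
  (forall w, differentiable F w) -> (forall w, differentiable G w) ->
  LP_bracket F G (Jemu mu x) = 0 ->
  poisson_commute_at [set: 'rV[R]_6] (om x) (F \o Jemu mu) (G \o Jemu mu) x.
Proof.
by move=> hom /proj_surj [q <- nz]; exact: Jemu_poisson_commute_at.
Qed.

Unset Implicit Arguments.

Theorem mainTheorem13 (R : realType) (H K : 'rV[R]_6 -> R) :
  smooth H -> smooth K ->
  (forall w, LP_bracket H K w = 0) ->
  (* (a) *)
  (forall x : 'rV[R]_8, @Ttilde R x ->
     let T := [set: 'rV[R]_8] in
     let om := @Omega R in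
     (poisson_commute_at T om (H \o @Je R) (K \o @Je R) x /\
      poisson_commute_at T om (H \o @Je R) (@J0 R) x /\
      poisson_commute_at T om (H \o @Je R) (@G0 R) x /\
      poisson_commute_at T om (K \o @Je R) (@J0 R) x /\
      poisson_commute_at T om (K \o @Je R) (@G0 R) x /\
      poisson_commute_at T om (@J0 R) (@G0 R) x) /\
     (K1 (Je x) = J0 x * G0 x /\ K2 (Je x) = G0 x ^+ 2)) /\
  (* (b) *)
  (forall (mu : R) (om : 'rV[R]_6 -> 'rV[R]_6 -> 'rV[R]_6 -> R),
     is_Omega_mu mu om ->
     forall x : 'rV[R]_6, @Rdot3 R x ->
     let T := [set: 'rV[R]_6] in
     [/\ K2 (Jemu mu x) = ysq x,
         poisson_commute_at T (om x) (H \o Jemu mu) (K \o Jemu mu) x,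
         poisson_commute_at T (om x) (H \o Jemu mu) (@K2 R \o Jemu mu) x
       & poisson_commute_at T (om x) (K \o Jemu mu) (@K2 R \o Jemu mu) x]) /\
  (* (c) *)
  (forall nu : R, nu < 0 ->
     forall x : 'rV[R]_8, S_nu nu x ->
     [/\ poisson_commute_at (TS x) (@Omega R) (H \o @Je R) (K \o @Je R) x,
         poisson_commute_at (TS x) (@Omega R) (H \o @Je R) (@J0 R) x
       & poisson_commute_at (TS x) (@Omega R) (K \o @Je R) (@J0 R) x]).
Proof.
move=> /smooth_differentiable dH /smooth_differentiable dK hHK.
have dK2 w : differentiable (@K2 R) w by rewrite K2_ysq ysqE; exact: differentiable_quad.
split; [|split].
- move=> x _ T om; split; last by split; [exact: K1_Je | exact: K2_Je].
  split; first exact: Je_poisson_commute.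
  split; first exact: Je_commute_J0.
  split; first exact: Je_commute_G0.
  split; first exact: Je_commute_J0.
  split; first exact: Je_commute_G0.
  exact: J0_commute_G0.
- move=> mu om hom x hx T; split; first exact: K2_Jemu.
  + exact: Jemu_poisson_commute.
  + by apply: Jemu_poisson_commute => //; exact: LP_bracket_K2.
  + by apply: Jemu_poisson_commute => //; exact: LP_bracket_K2.
- move=> nu nu0 x hx; split; first exact: Snu_poisson_commute nu0 hx _ _ dH dK _.
  + exact: Snu_commute_J0 nu0 hx _ dH.
  + exact: Snu_commute_J0 nu0 hx _ dK.
Qed.
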